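(* Let $m\ge2$ be even and let $\mathcal{A},\mathcal{B}$ be real $m$-th order $n$-dimensional tensors ($n=n_1+\cdots+n_r$) that are sub-symmetric. Then there exists $(x,\lambda)$ with $x\neq0$, $x\in\mathcal{K}$, $(\lambda\mathcal{A}-\mathcal{B})x^{m-1}\in\mathcal{K}$ and $\langle x,(\lambda\mathcal{A}-\mathcal{B})x^{m-1}\rangle=0$ if and only if the problem $$\begin{array}{cl}\min & f(x,y,w,\lambda):=\|y-\lambda^{\frac1{m-1}}x\|^2+(x^\top w)^2\\ \text{s.t.} & w-\mathcal{A}y^{m-1}+\mathcal{B}x^{m-1}=0,\\ & (x^i_\circ)^2-\|x^i_\bullet\|^2\ge0,\ x^i_\circ\ge0,\ i=1,\ldots,r,\\ & (w^i_\circ)^2-\|w^i_\bullet\|^2\ge0,\ w^i_\circ\ge0,\ i=1,\ldots,r,\\ & e^\top x=1,\quad e^\top y=\lambda^{\frac1{m-1}},\end{array}$$ over $(x,y,w,\lambda)\in\mathbb{R}^n\times\mathbb{R}^n\times\mathbb{R}^n\times\mathbb{R}$ has a global minimizer at which the objective value is zero.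
   Context: A real $m$-th order $n$-dimensional tensor is $\mathcal{A}=(a_{i_1\ldots i_m})$; it is sub-symmetric if for each $i$ the $(m-1)$-th order tensor $(a_{ii_2\ldots i_m})_{i_2,\ldots,i_m}$ is symmetric (invariant under permutations of $i_2,\ldots,i_m$). $\mathcal{A}x^{m-1}\in\mathbb{R}^n$ has $i$-th component $\sum_{i_2,\ldots,i_m}a_{ii_2\ldots i_m}x_{i_2}\cdots x_{i_m}$. Vectors are written $x=(x^1,\ldots,x^r)\in\mathbb{R}^{n_1}\times\cdots\times\mathbb{R}^{n_r}$, $x^i=(x^i_\circ,x^i_\bullet)\in\mathbb{R}\times\mathbb{R}^{n_i-1}$ (similarly for $y,w$). $\mathcal{K}=\mathcal{K}^{n_1}\times\cdots\times\mathcal{K}^{n_r}$, $\mathcal{K}^{n_i}=\{x^i:x^i_\circ\ge\|x^i_\bullet\|\}$. $e=(e^1,\ldots,e^r)$, $e^i=(1,0,\ldots,0)^\top\in\mathbb{R}^{n_i}$. Since $m-1$ is odd, $\lambda^{1/(m-1)}$ denotes the real $(m-1)$-th root of $\lambda\in\mathbb{R}$. *)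

From HB Require Import structures.
From mathcomp Require Import all_boot all_order all_algebra all_fingroup.
From mathcomp Require Import all_classical all_reals all_analysis.
Set Implicit Arguments. Unset Strict Implicit. Unset Printing Implicit Defensive.
Import Order.TTheory GRing.Theory Num.Theory.
Local Open Scope ring_scope.

Section Defs.
Variable R : realType.

(* Block structure: r blocks, block i has dimension n_i = (k i).+1 >= 1.
   Index set of R^n (n = n_1 + ... + n_r) is the disjoint union of the blocks. *)
Definition idx (r : nat) (k : 'I_r -> nat) : finType := {i : 'I_r & 'I_(k i).+1}.

Variables (r : nat) (k : 'I_r -> nat).
Local Notation J := (idx k).

Definition vec := J -> R.

(* An m-th order n-dimensional tensor a_{i1 i2 ... im}, given as
   A i1 (i2,...,im), the last m-1 indices packed in a finite function. *)
Definition tensor (m : nat) := J -> {ffun 'I_m.-1 -> J} -> R.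

Definition subsymmetric m (A : tensor m) : Prop :=
  forall (i : J) (s : {perm 'I_m.-1}) (t : {ffun 'I_m.-1 -> J}),
    A i [ffun l => t (s l)] = A i t.

Definition tapply m (A : tensor m) (x : vec) : vec :=
  fun i => \sum_(t : {ffun 'I_m.-1 -> J}) A i t * \prod_(l < m.-1) x (t l).

Definition tlin m (lam : R) (A B : tensor m) : tensor m :=
  fun i t => lam * A i t - B i t.

Definition xhead (x : vec) (i : 'I_r) : R := x (@Tagged _ i (fun i => 'I_(k i).+1) ord0).
Definition xtailsq (x : vec) (i : 'I_r) : R :=
  \sum_(l < (k i).+1 | l != ord0) x (@Tagged _ i (fun i => 'I_(k i).+1) l) ^+ 2.

Definition inK (x : vec) : Prop :=
  forall i, Num.sqrt (xtailsq x i) <= xhead x i.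

Definition inner (x y : vec) : R := \sum_(j : J) x j * y j.

Definition eT (x : vec) : R := \sum_(i < r) xhead x i.

Definition sqnorm (x : vec) : R := \sum_(j : J) x j ^+ 2.

Definition realroot (p : nat) (lam : R) : R :=
  if 0 <= lam then powR lam (p%:R^-1) else - powR (- lam) (p%:R^-1).

Definition fobj m (x y w : vec) (lam : R) : R :=
  sqnorm (fun j => y j - realroot m.-1 lam * x j) + (inner x w) ^+ 2.

Definition feasible m (A B : tensor m) (x y w : vec) (lam : R) : Prop :=
  [/\ forall j, w j - tapply A y j + tapply B x j = 0,
      forall i, 0 <= xhead x i ^+ 2 - xtailsq x i /\ 0 <= xhead x i,
      forall i, 0 <= xhead w i ^+ 2 - xtailsq w i /\ 0 <= xhead w i,
      eT x = 1 &
      eT y = realroot m.-1 lam].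

Definition global_minimizer m (A B : tensor m) (x y w : vec) (lam : R) : Prop :=
  feasible A B x y w lam /\
  forall x' y' w' lam', feasible A B x' y' w' lam' ->
    fobj m x y w lam <= fobj m x' y' w' lam'.

End Defs.

From HB Require Import structures.
From mathcomp Require Import all_boot all_order all_algebra all_fingroup.
From mathcomp Require Import all_classical all_reals all_analysis.
From mathcomp Require Import ring.
Import Order.TTheory GRing.Theory Num.Theory.
Local Open Scope ring_scope.

(** Since [m - 1] is odd, [y = lambda^(1/(m-1)) x] turns the equality
    constraint into [w = (lambda A - B) x^(m-1)], so a feasible point of
    objective zero is exactly a normalized eigenpair together with its
    image [w].  Conversely an eigenvector of the cone lies in [K], hence
    has [e^T x > 0]; rescaling it to [e^T x = 1] keeps every constraint
    by homogeneity, and the resulting point is a global minimizer because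
    the objective is a sum of squares. *)

Set Implicit Arguments. Unset Strict Implicit.

Lemma realroot_pow (R : realType) (p : nat) (lam : R) :
  odd p -> realroot p lam ^+ p = lam.
Proof.
move=> p_odd; have p_gt0 : (0 < p)%N by case: p p_odd.
have powR_invK (a : R) : 0 <= a -> powR a p%:R^-1 ^+ p = a.
  move=> a_ge0; rewrite -powR_mulrn ?powR_ge0 // -powRrM mulVf ?powRr1 //.
  by rewrite pnatr_eq0 -lt0n.
rewrite /realroot; case: ifP => [/powR_invK //|/negbT].
rewrite -ltNge => lam_lt0.
by rewrite -mulN1r exprMn powR_invK ?oppr_ge0 ?ltW // -signr_odd p_odd mulN1r opprK.
Qed.

Section Cone.
Variables (R : realType) (r : nat) (k : 'I_r -> nat).
Implicit Types (x : vec R k) (c : R).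

Local Notation head i := (@Tagged _ i (fun i => 'I_(k i).+1) ord0).

Lemma tapplyZ m (A : tensor R k m) c x j :
  tapply A (fun j => c * x j) j = c ^+ m.-1 * tapply A x j.
Proof.
rewrite /tapply mulr_sumr; apply: eq_bigr => t _.
rewrite big_split /= prodr_const card_ord; ring.
Qed.

Lemma tapply_tlin m lam (A B : tensor R k m) x j :
  tapply (tlin lam A B) x j = lam * tapply A x j - tapply B x j.
Proof.
rewrite /tapply /tlin mulr_sumr -sumrB; apply: eq_bigr => t _.
by rewrite mulrBl mulrA.
Qed.

Lemma xtailsq_ge0 x i : 0 <= xtailsq x i.
Proof. by apply: sumr_ge0 => l _; apply: sqr_ge0. Qed.

Lemma inKP x :
  inK x <-> forall i, 0 <= xhead x i ^+ 2 - xtailsq x i /\ 0 <= xhead x i.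
Proof.
split=> xK i.
  have head_ge0 : 0 <= xhead x i by apply: le_trans (xK i); apply: sqrtr_ge0.
  split=> //; rewrite subr_ge0 -(sqr_sqrtr (xtailsq_ge0 x i)).
  by apply: lerXn2r => //; rewrite qualifE /= ?sqrtr_ge0.
case: (xK i) => tail_le head_ge0.
by rewrite -(ger0_norm head_ge0) -sqrtr_sqr ler_sqrt ?sqr_ge0 // -subr_ge0.
Qed.

Lemma inKZ c x : 0 <= c -> inK x -> inK (fun j => c * x j).
Proof.
move=> c_ge0 /inKP xK; apply/inKP => i; case: (xK i) => tail_le head_ge0.
have -> : xtailsq (fun j => c * x j) i = c ^+ 2 * xtailsq x i.
  by rewrite /xtailsq mulr_sumr; apply: eq_bigr => l _; rewrite exprMn.
split; last exact: mulr_ge0.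
by rewrite /xhead exprMn -mulrBr mulr_ge0 ?sqr_ge0.
Qed.

Lemma eTZ c x : eT (fun j => c * x j) = c * eT x.
Proof. by rewrite /eT /xhead mulr_sumr. Qed.

(* A cone element with zero heads has zero tails, since [||x_bullet|| <= x_circ]. *)
Lemma inK_eT_gt0 x : inK x -> (exists j, x j != 0) -> 0 < eT x.
Proof.
move=> /inKP xK [[i l] xil_neq0]; rewrite lt_def.
have eT_ge0 : 0 <= eT x by apply: sumr_ge0 => i' _; case: (xK i').
rewrite eT_ge0 andbT; apply: contra xil_neq0 => /eqP eT0.
have head0 : xhead x i = 0.
  by apply: (psumr_eq0P (P := predT)) eT0 _ _ => // i' _; case: (xK i').
have tail0 : xtailsq x i = 0.
  apply/eqP; rewrite eq_le xtailsq_ge0 andbT.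
  by case: (xK i); rewrite head0 expr0n /= sub0r oppr_ge0.
case: (eqVneq l ord0) => [->|l_neq0]; first by rewrite -[_ == _]/(xhead x i == 0) head0.
have := psumr_eq0P (fun l _ => sqr_ge0 _) tail0 l_neq0.
by move/eqP; rewrite sqrf_eq0.
Qed.

Lemma eT_neq0_nonzero x : eT x != 0 -> exists j, x j != 0.
Proof.
move=> eT_neq0; apply: contrapT => /forallNP x0; move/eqP: eT_neq0; apply.
by apply: big1 => i _; have := x0 (head i); case: eqP.
Qed.

Lemma sqnorm_eq0P x : sqnorm x = 0 <-> forall j, x j = 0.
Proof.
split=> [x0 j|x0]; last by apply: big1 => j _; rewrite x0 expr0n.
have /eqP := psumr_eq0P (P := predT) (fun j _ => sqr_ge0 (x j)) x0 (i := j) isT.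
by rewrite sqrf_eq0 => /eqP.
Qed.

Lemma fobj_ge0 m x y w lam : 0 <= fobj m x y w lam.
Proof. by rewrite addr_ge0 ?sqr_ge0 //; apply: sumr_ge0 => j _; apply: sqr_ge0. Qed.

Lemma fobj_eq0P m x y w lam : fobj m x y w lam = 0 <->
  (forall j, y j = realroot m.-1 lam * x j) /\ inner x w = 0.
Proof.
rewrite /fobj; split=> [/eqP|[yE xw0]].
  have sqnorm_ge0 : 0 <= sqnorm (fun j => y j - realroot m.-1 lam * x j).
    by apply: sumr_ge0 => j _; apply: sqr_ge0.
  rewrite paddr_eq0 ?sqr_ge0 // sqrf_eq0.
  case/andP=> /eqP/sqnorm_eq0P y0 /eqP; split=> // j.
  by apply/eqP; rewrite -subr_eq0 y0.
rewrite xw0 expr0n addr0; apply/sqnorm_eq0P => j.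
by rewrite yE subrr.
Qed.

End Cone.

Section Reformulation.
Variables (R : realType) (r : nat) (k : 'I_r -> nat) (m : nat).
Hypothesis m1_odd : odd m.-1.
Variables (A B : tensor R k m).

Definition cone_eigenpair (x : vec R k) (lam : R) : Prop :=
  [/\ exists j, x j != 0, inK x, inK (tapply (tlin lam A B) x) &
      inner x (tapply (tlin lam A B) x) = 0].

Lemma feasible_on_ray_tapply (x y w : vec R k) lam :
  (forall j, y j = realroot m.-1 lam * x j) ->
  (forall j, w j - tapply A y j + tapply B x j = 0) ->
  w = tapply (tlin lam A B) x.
Proof.
move=> yE wE; apply: funext => j.
have := wE j; rewrite (_ : y = fun j => realroot m.-1 lam * x j); last exact: funext.
rewrite tapplyZ realroot_pow // tapply_tlin => wE_j.
by apply/eqP; rewrite -subr_eq0 -wE_j; apply/eqP; ring.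
Qed.

Lemma zero_minimizer_eigenpair (x y w : vec R k) lam :
  feasible A B x y w lam -> fobj m x y w lam = 0 -> cone_eigenpair x lam.
Proof.
move=> [wE xK wK eTx1 _] /fobj_eq0P [yE xw0].
have wT := feasible_on_ray_tapply yE wE; rewrite /cone_eigenpair -wT.
split=> //; try exact/inKP.
by apply: eT_neq0_nonzero; rewrite eTx1 oner_neq0.
Qed.

Lemma eigenpair_zero_minimizer (x : vec R k) lam : cone_eigenpair x lam ->
  exists x' y w, global_minimizer A B x' y w lam /\ fobj m x' y w lam = 0.
Proof.
move=> [x_neq0 xK TxK xTx0].
have c_gt0 : 0 < (eT x)^-1 by rewrite invr_gt0 inK_eT_gt0.
set c := (eT x)^-1 in c_gt0; set mu := realroot m.-1 lam.
pose x' := fun j => c * x j; pose y := fun j => mu * x' j.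
pose w := fun j => c ^+ m.-1 * tapply (tlin lam A B) x j.
have f0 : fobj m x' y w lam = 0.
  apply/fobj_eq0P; split=> //; rewrite /inner.
  under eq_bigr do rewrite /x' /w mulrCA -!mulrA mulrCA.
  by rewrite -mulr_sumr -mulr_sumr [X in _ * (_ * X)]xTx0 !mulr0.
have feas : feasible A B x' y w lam.
  split.
  - move=> j; rewrite /y tapplyZ /x' !tapplyZ /w tapply_tlin /mu realroot_pow //; ring.
  - by apply/inKP; apply: inKZ; rewrite ?ltW.
  - by apply/inKP; apply: inKZ; rewrite ?exprn_ge0 ?ltW.
  - by rewrite eTZ mulVf // gt_eqF ?inK_eT_gt0.
  - by rewrite /y eTZ /x' eTZ mulVf ?mulr1 // gt_eqF ?inK_eT_gt0.
exists x', y, w; split=> //; split=> // x1 y1 w1 l1 _.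
by rewrite f0 fobj_ge0.
Qed.

End Reformulation.

Theorem theorem4 (R : realType) (m : nat) (hm2 : (2 <= m)%N) (hmeven : ~~ odd m)
    (r : nat) (k : 'I_r -> nat) (A B : tensor R k m) :
  subsymmetric A -> subsymmetric B ->
  ((exists (x : vec R k) (lam : R),
      (exists j, x j != 0) /\ inK x /\ inK (tapply (tlin lam A B) x) /\
      inner x (tapply (tlin lam A B) x) = 0)
   <->
   (exists (x y w : vec R k) (lam : R),
      global_minimizer A B x y w lam /\ fobj m x y w lam = 0)).
Proof.
move=> _ _.
have m1_odd : odd m.-1 by move: hm2 hmeven; case: (m) => // m' _ /=; rewrite negbK.
split.
- move=> [x [lam [x_neq0 [xK [TxK xTx0]]]]].
  have [x' [y [w minimizer]]] := eigenpair_zero_minimizer m1_odd (And4 x_neq0 xK TxK xTx0).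
  by exists x', y, w, lam.
- move=> [x [y [w [lam [[feas _] f0]]]]].
  have [x_neq0 xK TxK xTx0] := zero_minimizer_eigenpair m1_odd feas f0.
  by exists x, lam.
Qed.
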